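(* Let $\alpha\in(0,\kappa(\mathbf{A})^{-1/2})$ and let $\lambda>0$ satisfy $\alpha\le\kappa(\mathbf{A})^{-1/2}(1-\|\mathbf{A}\|\lambda^2)^{1/2}$. Let $\Lambda=\Lambda_0\times\cdots\times\Lambda_J\subset\mathcal{G}$ be a finite product set and $\mathbf{w}_\Lambda\in\ell_2(\mathcal{G})$ with $\operatorname{supp}\mathbf{w}_\Lambda\subseteq\Lambda$. Assume that $\pi^{(0)}(\mathbf{u})\in\mathcal{A}^{s_1}(\mathcal{G}_0)$ and $\pi^{(j)}(\mathbf{u})\in\mathcal{A}^{s_2}(\mathcal{G}_j)$ for $j=1,\dots,J$, with $s_1,s_2>0$. Let $\Lambda^*=\Lambda^*_0\times\cdots\times\Lambda^*_J\subset\mathcal{G}$ be a minimizer of $\sum_{j=0}^J\#(\Lambda^*_j\setminus\Lambda_j)$ among the product sets satisfying \[\|\mathbf{R}_{\Lambda^*}(\mathbf{A}\mathbf{w}_\Lambda-\mathbf{f})\|\ge\alpha\|\mathbf{A}\mathbf{w}_\Lambda-\mathbf{f}\|.\] Then \[ \sum_{j=0}^J\#(\Lambda^*_j\setminus\Lambda_j)\le 2C^{1/s_1}\|\mathbf{A}\mathbf{w}_\Lambda-\mathbf{f}\|^{-1/s_1}\|\pi^{(0)}(\mathbf{u})\|_{\mathcal{A}^{s_1}}^{1/s_1}+2C^{1/s_2}\|\mathbf{A}\mathbf{w}_\Lambda-\mathbf{f}\|^{-1/s_2}\sum_{j=1}^J\|\pi^{(j)}(\mathbf{u})\|_{\mathcal{A}^{s_2}}^{1/s_2},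 \] where $C=(J+1)\sqrt{\|\mathbf{A}\|}/\lambda$.
   Context: Parametric problem: $D\subset\mathbb{R}^d$ a domain, $V=H^1_0(D)$, $f\in L_2(D)$, $a(x,y)=\bar a(x)+\sum_{j\ge1}y_j\theta_j(x)$ with $\bar a,\theta_j\in L_\infty(D)$, $y\in Y=[-1,1]^{\mathbb{N}}$, and $\bar a-\sum_j|\theta_j|\ge r>0$. Let $\sigma$ be the uniform product probability measure on $Y$, $\mathcal{F}=\{\nu\in\mathbb{N}_0^{\mathbb{N}}:$ finitely many nonzero entries$\}$, $L_\nu(y)=\prod_i L_{\nu_i}(y_i)$ the $L_2(Y;\sigma)$-orthonormal product Legendre polynomials, and $\{\psi_\lambda\}_{\lambda\in\mathcal{S}}$ a Riesz basis of $V$. The operator $\mathbf{A}$ on $\ell_2(\mathcal{F}\times\mathcal{S})$ has entries $\mathbf{A}_{(\nu,\lambda),(\nu',\lambda')}=\int_Y\int_D a(x,y)\nabla\psi_{\lambda'}\cdot\nabla\psi_\lambda\,L_\nu L_{\nu'}\,dx\,d\sigma(y)$, and $\mathbf{f}_{(\nu,\lambda)}=\int_D f\psi_\lambda\,dx\int_Y L_\nu\,d\sigma$; $\mathbf{A}$ is bounded, symmetric and positive definite on $\ell_2$, $\kappa(\mathbf{A})=\|\mathbf{A}\|\|\mathbf{A}^{-1}\|$, and $\mathbf{u}$ is the solution of $\mathbf{A}\mathbf{u}=\mathbf{f}$. Fix $J\ge1$ and identify $\mathcal{F}\times\mathcal{S}$ with $\mathcal{G}=\mathcal{G}_0\times\mathcal{G}_1\times\cdots\times\mathcal{G}_J$,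 where $\mathcal{G}_0=\mathcal{F}\times\mathcal{S}$ (index $(\bar\nu,\lambda)$ with $\bar\nu=(\nu_{J+1},\nu_{J+2},\dots)$ the tail multi-index) and $\mathcal{G}_j=\mathbb{N}_0$ (index $\nu_j$) for $j=1,\dots,J$. $\|\cdot\|$ denotes the $\ell_2$ norm; a product set is $\Lambda_0\times\cdots\times\Lambda_J$ with $\Lambda_j\subseteq\mathcal{G}_j$; $\mathbf{R}_\Lambda$ is pointwise multiplication by the indicator of $\Lambda$. Contractions of $\mathbf{v}\in\ell_2(\mathcal{G})$: $\pi^{(0)}(\mathbf{v})\in\ell_2(\mathcal{G}_0)$ with $\pi^{(0)}_{(\bar\nu,\lambda)}(\mathbf{v})=(\sum_{(\nu_1,\dots,\nu_J)}|\mathbf{v}_{(\bar\nu,\lambda),\nu_1,\dots,\nu_J}|^2)^{1/2}$, and for $j=1,\dots,J$, $\pi^{(j)}(\mathbf{v})\in\ell_2(\mathcal{G}_j)$ with $\pi^{(j)}_{\nu_j}(\mathbf{v})=(\sum_{(\bar\nu,\lambda)}\sum_{\nu_i,\,i\neq j}|\mathbf{v}_{(\bar\nu,\lambda),\nu_1,\dots,\nu_J}|^2)^{1/2}$. Approximation classes: for a countable set $\mathcal{H}$ and $s>0$, $\mathcal{A}^s(\mathcal{H})$ is the set of $\mathbf{v}\in\ell_2(\mathcal{H})$ with $\|\mathbf{v}\|_{\mathcal{A}^s}:=\sup_{N\in\mathbb{N}_0}(N+1)^s\inf_{\#\operatorname{supp}\mathbf{v}_N\le N}\|\mathbf{v}-\mathbf{v}_N\|<\infty$.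 *)

From mathcomp Require Import all_boot all_order all_algebra.
From mathcomp Require Import all_classical all_reals all_analysis.
Set Implicit Arguments. Unset Strict Implicit. Unset Printing Implicit Defensive.
Import Order.TTheory GRing.Theory Num.Theory.
Local Open Scope classical_set_scope.
Local Open Scope ring_scope.

Section L2.
Variable R : realType.

Definition sqnorm (H : choiceType) (v : H -> R) : \bar R :=
  \esum_(x in [set: H]) ((v x) ^+ 2)%:E.

Definition inl2 (H : choiceType) (v : H -> R) : Prop := (sqnorm v < +oo)%E.

Definition l2norm (H : choiceType) (v : H -> R) : R := Num.sqrt (fine (sqnorm v)).

Definition l2inner (H : choiceType) (v w : H -> R) : R :=
  (l2norm (fun x => v x + w x) ^+ 2 - l2norm (fun x => v x - w x) ^+ 2) / 4.

Definition opnorm (H : choiceType) (A : (H -> R) -> (H -> R)) : R :=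
  sup [set l2norm (A v) | v in [set v | inl2 v /\ l2norm v <= 1]].

Definition supp_le (H : countType) (w : H -> R) (N : nat) : Prop :=
  exists s : seq H, (size s <= N)%N /\ forall x, w x != 0 -> x \in s.

Definition best_nterm (H : countType) (v : H -> R) (N : nat) : R :=
  inf [set l2norm (fun x => v x - w x) | w in [set w | supp_le w N]].

Definition as_norm (H : countType) (s : R) (v : H -> R) : \bar R :=
  ereal_sup [set ((N.+1%:R `^ s) * best_nterm v N)%:E | N in [set: nat]].

Definition inAs (H : countType) (s : R) (v : H -> R) : Prop :=
  inl2 v /\ (as_norm s v < +oo)%E.

End L2.

(* The index set G = G_0 x G_1 x ... x G_J with G_j = nat (j = 1..J);
   the components G_1..G_J are stored as a J-tuple, component j (1<=j<=J)
   being tnth t (j-1) with (j-1) : 'I_J. *)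
Definition Gidx (G0 : countType) (J : nat) : countType := (G0 * (J.-tuple nat))%type.

Section Contr.
Variables (R : realType) (G0 : countType) (J : nat).

Definition pi0 (v : Gidx G0 J -> R) : G0 -> R :=
  fun g0 => Num.sqrt (fine (\esum_(t in [set: J.-tuple nat]) ((v (g0, t)) ^+ 2)%:E)).

(* pi^(j)(v)_(n) = (sum over all indices with nu_j = n of |v|^2)^(1/2),
   here for j = val k + 1 with k : 'I_J *)
Definition pij (k : 'I_J) (v : Gidx G0 J -> R) : nat -> R :=
  fun n => Num.sqrt (fine (\esum_(x in [set x : Gidx G0 J | tnth x.2 k = n])
                               ((v x) ^+ 2)%:E)).

Definition in_prod (L0 : seq G0) (L : 'I_J -> seq nat) (x : Gidx G0 J) : bool :=
  (x.1 \in L0) && [forall k : 'I_J, tnth x.2 k \in L k].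

Definition restr (L0 : seq G0) (L : 'I_J -> seq nat) (v : Gidx G0 J -> R) :
  Gidx G0 J -> R := fun x => if in_prod L0 L x then v x else 0.

Definition card_diff (T : eqType) (s t : seq T) : nat :=
  size (undup [seq x <- s | x \notin t]).

Definition prod_cost (Ls0 : seq G0) (Ls : 'I_J -> seq nat)
    (L0 : seq G0) (L : 'I_J -> seq nat) : nat :=
  (card_diff Ls0 L0 + \sum_(k < J) card_diff (Ls k) (L k))%N.

End Contr.

From mathcomp Require Import all_boot all_order all_algebra.
From mathcomp Require Import all_classical all_reals all_analysis.
From mathcomp Require Import ring lra.
Import Order.TTheory GRing.Theory Num.Theory.
Local Open Scope classical_set_scope.
Local Open Scope ring_scope.
Set Implicit Arguments. Unset Strict Implicit. Unset Printing Implicit Defensive.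

(* Put [delta := |r| / C], where [r = A w - f = A (w - u)].  Since [pi0 u] lies in [A^s1], some
   [S_0] with at most [(|pi0 u|_A^s1 / delta)^(1/s1)] indices carries all of its squared mass
   up to [delta^2], and likewise some [S_j] for each [pij j u].  Outside the enlarged product
   set [L' = (L_0 ++ S_0) x ... x (L_J ++ S_J)] the mass of [u] is at most the sum of these
   J+1 tails, so [|A| |u - R_L' u|^2 <= (J+1) |A| delta^2 <= lam^2 |r|^2].
   For [e = w - u] and [y = w - R_L' u], which is supported in [L'], the identity
   [<Ae,e> = <A(e-y),e-y> + 2<Ae,y> - <Ay,y>] together with [|Ae|^2 <= |A| <Ae,e>] and
   [|y|^2 <= |A^-1| <Ay,y>] gives [|r|^2 <= |A| lam^2 |r|^2 + kappa |R_L' r|^2]; by the choice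
   of [alpha] this is the bulk criterion for [L'].  By minimality the cost of [Lambda*] is at
   most that of [L'], i.e. at most [#S_0 + sum_j #S_j]. *)

Section L2Space.
Variables (R : realType) (H : choiceType).
Implicit Types (v w : H -> R).

Definition l2sq v : R := fine (sqnorm v).

Lemma sqnorm_ge0 v : (0 <= sqnorm v)%E.
Proof. by apply: esum_ge0 => x _; rewrite lee_fin sqr_ge0. Qed.

Lemma l2sq_ge0 v : 0 <= l2sq v.
Proof. exact: fine_ge0 (sqnorm_ge0 v). Qed.

Lemma sqnormE v : inl2 v -> sqnorm v = (l2sq v)%:E.
Proof. by move=> hv; rewrite /l2sq fineK // ge0_fin_numE // sqnorm_ge0. Qed.

Lemma sqr_l2norm v : l2norm v ^+ 2 = l2sq v.
Proof. by rewrite sqr_sqrtr // l2sq_ge0. Qed.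

Lemma l2norm_ge0 v : 0 <= l2norm v.
Proof. exact: sqrtr_ge0. Qed.

Lemma ge0_esumZl (I : set H) (c : R) (f : H -> \bar R) : 0 <= c ->
  (forall x, 0 <= f x)%E ->
  (\esum_(i in I) (c%:E * f i) = c%:E * \esum_(i in I) f i)%E.
Proof.
move=> c0 f0; rewrite /esum -ereal_supZl //; last first.
  by apply/set0P; exists (\sum_(x \in set0) f x)%E; exists set0 => //; exact: fsets_set0.
congr ereal_sup; apply/seteqP; split.
- move=> _ [X hX <-]; exists (\sum_(x \in X) f x)%E; first by exists X.
  by rewrite ge0_mule_fsumr.
- by move=> _ [_ [X hX <-] <-]; exists X => //; rewrite ge0_mule_fsumr.
Qed.

Fixpoint nonneg_l2_weights (ps : seq (R * (H -> R))) : Prop :=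
  if ps is p :: ps' then [/\ 0 <= p.1, inl2 p.2 & nonneg_l2_weights ps'] else True.

Lemma esum_weighted_sqr ps : nonneg_l2_weights ps ->
  (\esum_(x in [set: H]) (\sum_(p <- ps) p.1 * p.2 x ^+ 2)%:E =
   (\sum_(p <- ps) p.1 * l2sq p.2)%:E)%E.
Proof.
elim: ps => [_|p ps IH [p0 hp hps]].
  by rewrite big_nil esum1 // => x _; rewrite big_nil.
have ps_ge0 x : 0 <= \sum_(q <- ps) q.1 * q.2 x ^+ 2.
  elim: ps hps {IH} => [|q qs IHq [q0 _ hqs]]; first by rewrite big_nil.
  by rewrite big_cons addr_ge0 ?IHq // mulr_ge0 // sqr_ge0.
rewrite big_cons; under eq_esum do rewrite big_cons EFinD.
rewrite esumD => [||x _]; last by rewrite lee_fin.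
- rewrite IH // EFinD; congr (_ + _)%E.
  under eq_esum do rewrite EFinM.
  rewrite ge0_esumZl // => [|x]; last by rewrite lee_fin sqr_ge0.
  by rewrite -[X in (_ * X)%E]/(sqnorm p.2) sqnormE.
- by move=> x _; rewrite lee_fin mulr_ge0 // sqr_ge0.
Qed.

(* Polarization turns every identity between inner products into an identity
   between weighted sums of squared norms; this lemma is how all of them are proved. *)
Lemma eq_weighted_l2sq ps qs : nonneg_l2_weights ps -> nonneg_l2_weights qs ->
  (forall x, \sum_(p <- ps) p.1 * p.2 x ^+ 2 = \sum_(q <- qs) q.1 * q.2 x ^+ 2) ->
  \sum_(p <- ps) p.1 * l2sq p.2 = \sum_(q <- qs) q.1 * l2sq q.2.
Proof.
move=> hps hqs e; apply: EFin_inj; rewrite -!esum_weighted_sqr //.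
by apply: eq_esum => x _; rewrite e.
Qed.

Lemma inl2_sqr_le v w : inl2 v -> (forall x, w x ^+ 2 <= v x ^+ 2) -> inl2 w.
Proof. by move=> hv hwv; apply: le_lt_trans hv; apply: le_esum => x _; rewrite lee_fin. Qed.

Lemma l2sq_le v w : inl2 v -> (forall x, w x ^+ 2 <= v x ^+ 2) -> l2sq w <= l2sq v.
Proof.
move=> hv hwv; rewrite -lee_fin -!sqnormE //; last exact: inl2_sqr_le hwv.
by apply: le_esum => x _; rewrite lee_fin.
Qed.

Lemma inl2_lin a b v w : inl2 v -> inl2 w -> inl2 (fun x => a * v x + b * w x).
Proof.
move=> hv hw; pose ps := [:: (2 * a ^+ 2, v); (2 * b ^+ 2, w)].
have hps : nonneg_l2_weights ps by do 2?split => //; rewrite mulr_ge0 ?sqr_ge0.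
apply: (@le_lt_trans _ _ (\esum_(x in [set: H]) (\sum_(p <- ps) p.1 * p.2 x ^+ 2)%:E));
  last by rewrite esum_weighted_sqr // ltry.
apply: le_esum => x _; rewrite lee_fin !big_cons big_nil /=.
have := sqr_ge0 (a * v x - b * w x); nra.
Qed.

Lemma inl2_0 : inl2 (fun _ : H => 0 : R).
Proof. by rewrite /inl2 /sqnorm esum1 // => x _; rewrite expr0n. Qed.

Lemma inl2D v w : inl2 v -> inl2 w -> inl2 (fun x => v x + w x).
Proof. by move=> hv hw; have := inl2_lin 1 1 hv hw; under eq_fun do rewrite !mul1r. Qed.

Lemma inl2B v w : inl2 v -> inl2 w -> inl2 (fun x => v x - w x).
Proof. by move=> hv hw; have := inl2_lin 1 (-1) hv hw; under eq_fun do rewrite mul1r mulN1r. Qed.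

Lemma inl2Z a v : inl2 v -> inl2 (fun x => a * v x).
Proof. by move=> hv; have := inl2_lin a 0 hv hv; under eq_fun do rewrite mul0r addr0. Qed.

Lemma inl2N v : inl2 v -> inl2 (fun x => - v x).
Proof. by move=> hv; have := inl2Z (-1) hv; under eq_fun do rewrite mulN1r. Qed.

Lemma sqr_le_l2sq v x : inl2 v -> v x ^+ 2 <= l2sq v.
Proof.
move=> hv; rewrite -lee_fin -sqnormE //; apply: esum_ge; exists [set x].
  by split => //; exact: finite_set1.
by rewrite fsbig_set1.
Qed.

Lemma l2sq_eq0 v : inl2 v -> l2sq v = 0 -> v = (fun _ => 0).
Proof.
move=> hv v0; apply/funext => x; apply/eqP; rewrite -sqrf_eq0 eq_le sqr_ge0 andbT.
by rewrite -v0 sqr_le_l2sq.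
Qed.

Lemma eq_l2sq v w : inl2 v -> inl2 w -> (forall x, v x ^+ 2 = w x ^+ 2) -> l2sq v = l2sq w.
Proof.
move=> hv hw e.
have := @eq_weighted_l2sq [:: (1, v)] [:: (1, w)] (And3 ler01 hv I) (And3 ler01 hw I)
  ltac:(move=> x; rewrite !big_cons !big_nil /= e).
by rewrite !big_cons !big_nil /= !mul1r !addr0 => ->.
Qed.

Lemma l2sqZ a v : inl2 v -> l2sq (fun x => a * v x) = a ^+ 2 * l2sq v.
Proof.
move=> hv.
have := @eq_weighted_l2sq [:: (1, fun x => a * v x)] [:: (a ^+ 2, v)]
  (And3 ler01 (inl2Z a hv) I) (And3 (sqr_ge0 a) hv I)
  ltac:(move=> x; rewrite !big_cons !big_nil /= mul1r exprMn).
by rewrite !big_cons !big_nil /= mul1r !addr0 => ->.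
Qed.

Lemma l2normZ a v : inl2 v -> l2norm (fun x => a * v x) = `|a| * l2norm v.
Proof.
move=> hv; rewrite /l2norm -!/(l2sq _) l2sqZ // sqrtrM ?sqr_ge0 //.
by rewrite sqrtr_sqr.
Qed.

Lemma l2sq0 : l2sq (fun _ : H => 0 : R) = 0.
Proof. by rewrite /l2sq /sqnorm esum1 // => x _; rewrite expr0n. Qed.

Lemma l2norm0 : l2norm (fun _ : H => 0 : R) = 0.
Proof. by rewrite /l2norm -/(l2sq _) l2sq0 sqrtr0. Qed.

End L2Space.

Section L2Inner.
Variables (R : realType) (H : choiceType).
Implicit Types (v w : H -> R).

Lemma l2innerE v w :
  l2inner v w = (l2sq (fun x => v x + w x) - l2sq (fun x => v x - w x)) / 4.
Proof. by rewrite /l2inner !sqr_l2norm. Qed.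

Lemma l2inner_self v : inl2 v -> l2inner v v = l2sq v.
Proof.
move=> hv; rewrite l2innerE.
have := @eq_weighted_l2sq R H [:: (1, fun x => v x + v x)]
  [:: (4, v); (1, fun x => v x - v x)] (And3 ler01 (inl2D hv hv) I)
  (And3 (ler0n _ 4) hv (And3 ler01 (inl2B hv hv) I))
  ltac:(move=> x; rewrite !big_cons !big_nil /=; ring).
rewrite !big_cons !big_nil /=; lra.
Qed.

Lemma l2innerC v w : inl2 v -> inl2 w -> l2inner v w = l2inner w v.
Proof.
move=> hv hw; rewrite !l2innerE; congr ((_ - _) / 4).
  by congr l2sq; apply/funext => x; rewrite addrC.
by apply: eq_l2sq; [exact: inl2B|exact: inl2B|move=> x; ring].
Qed.

Lemma l2innerNl v w : inl2 v -> inl2 w -> l2inner (fun x => - v x) w = - l2inner v w.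
Proof.
move=> hv hw; rewrite !l2innerE.
rewrite (@eq_l2sq _ _ (fun x => - v x + w x) (fun x => v x - w x)); last 3 first.
- by apply: inl2D => //; exact: inl2N.
- exact: inl2B.
- by move=> x; ring.
rewrite (@eq_l2sq _ _ (fun x => - v x - w x) (fun x => v x + w x)); last 3 first.
- by apply: inl2B => //; exact: inl2N.
- exact: inl2D.
- by move=> x; ring.
by field.
Qed.

Lemma l2innerDl_ge0 a b v1 v2 w : 0 <= a -> 0 <= b -> inl2 v1 -> inl2 v2 -> inl2 w ->
  l2inner (fun x => a * v1 x + b * v2 x) w = a * l2inner v1 w + b * l2inner v2 w.
Proof.
move=> a0 b0 h1 h2 hw; rewrite !l2innerE.
have hP := inl2_lin a b h1 h2.
have := @eq_weighted_l2sq R H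
  [:: (1, fun x => a * v1 x + b * v2 x + w x); (a, fun x => v1 x - w x);
      (b, fun x => v2 x - w x)]
  [:: (1, fun x => a * v1 x + b * v2 x - w x); (a, fun x => v1 x + w x);
      (b, fun x => v2 x + w x)]
  (And3 ler01 (inl2D hP hw) (And3 a0 (inl2B h1 hw) (And3 b0 (inl2B h2 hw) I)))
  (And3 ler01 (inl2B hP hw) (And3 a0 (inl2D h1 hw) (And3 b0 (inl2D h2 hw) I)))
  ltac:(move=> x; rewrite !big_cons !big_nil /=; ring).
rewrite !big_cons !big_nil /=; lra.
Qed.

Lemma l2innerDl a b v1 v2 w : inl2 v1 -> inl2 v2 -> inl2 w ->
  l2inner (fun x => a * v1 x + b * v2 x) w = a * l2inner v1 w + b * l2inner v2 w.
Proof.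
wlog a0 : a v1 / 0 <= a => [hwlog h1 h2 hw|].
  have [a_ge0|an] := leP 0 a; first exact: hwlog.
  have := hwlog (- a) (fun x => - v1 x) ltac:(lra) (inl2N h1) h2 hw.
  by rewrite l2innerNl //; under eq_fun do rewrite mulrNN; move=> ->; ring.
wlog b0 : b v2 / 0 <= b => [hwlog h1 h2 hw|].
  have [b_ge0|bn] := leP 0 b; first exact: hwlog.
  have := hwlog (- b) (fun x => - v2 x) ltac:(lra) h1 (inl2N h2) hw.
  by rewrite l2innerNl //; under eq_fun do rewrite mulrNN; move=> ->; ring.
exact: l2innerDl_ge0.
Qed.

Lemma l2inner_disjoint v w : inl2 v -> inl2 w -> (forall x, v x * w x = 0) ->
  l2inner v w = 0.
Proof.
move=> hv hw vw0; rewrite l2innerE (@eq_l2sq _ _ (fun x => v x + w x) (fun x => v x - w x)).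
- by rewrite subrr mul0r.
- exact: inl2D.
- exact: inl2B.
- by move=> x; have := vw0 x; nra.
Qed.

Lemma l2inner0r v : l2inner v (fun _ => 0) = 0.
Proof.
rewrite l2innerE; under eq_fun do rewrite addr0.
by under [X in _ - l2sq X]eq_fun do rewrite subr0; rewrite subrr mul0r.
Qed.

End L2Inner.

Section CauchySchwarz.
Variables (R : realType) (H : choiceType) (Q : (H -> R) -> (H -> R) -> R).
Hypothesis QDl : forall a b v1 v2 w, inl2 v1 -> inl2 v2 -> inl2 w ->
  Q (fun x => a * v1 x + b * v2 x) w = a * Q v1 w + b * Q v2 w.
Hypothesis QC : forall v w, inl2 v -> inl2 w -> Q v w = Q w v.
Hypothesis Q_ge0 : forall v, inl2 v -> 0 <= Q v v.
Hypothesis Q_degenerate : forall v w, inl2 v -> inl2 w -> Q v v = 0 -> Q w v = 0.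

Lemma cauchy_schwarz v w : inl2 v -> inl2 w -> Q v w ^+ 2 <= Q v v * Q w w.
Proof.
move=> hv hw; have [ww0|ww0] := eqVneq (Q w w) 0.
  by rewrite (Q_degenerate hw hv ww0) ww0 expr0n mulr0.
have ww_gt0 : 0 < Q w w by rewrite lt0r ww0 Q_ge0.
set a := Q w w; set b := Q v w.
have hz := inl2_lin a (- b) hv hw.
(* expand 0 <= Q z z for z = a v - b w *)
have := Q_ge0 hz; rewrite QDl // (QC hv hz) (QC hw hz) !QDl //.
rewrite -/a -/b (QC hw hv) -/b => h.
have : 0 <= a * (a * Q v v - b ^+ 2) by rewrite expr2; nra.
by rewrite pmulr_rge0 // subr_ge0 => h2; nra.
Qed.

End CauchySchwarz.

Lemma l2inner_le (R : realType) (H : choiceType) (v w : H -> R) :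
  inl2 v -> inl2 w -> l2inner v w <= l2norm v * l2norm w.
Proof.
move=> hv hw.
have l2inner_ge0 (u : H -> R) : inl2 u -> 0 <= l2inner u u.
  by move=> hu; rewrite l2inner_self ?l2sq_ge0.
have l2inner_degenerate (u z : H -> R) : inl2 u -> inl2 z -> l2inner u u = 0 -> l2inner z u = 0.
  by move=> hu hz; rewrite l2inner_self // => /(l2sq_eq0 hu) ->; exact: l2inner0r.
have := cauchy_schwarz (@l2innerDl R H) (@l2innerC R H) l2inner_ge0 l2inner_degenerate hv hw.
rewrite !l2inner_self // -!sqr_l2norm -exprMn.
have : 0 <= l2norm v * l2norm w by rewrite mulr_ge0 ?l2norm_ge0.
move: (l2norm v * l2norm w) => q q0 h; nra.
Qed.

Section OperatorNorm.
Variables (R : realType) (H : choiceType) (T : (H -> R) -> (H -> R)).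
Hypothesis T_l2 : forall v, inl2 v -> inl2 (T v).
Hypothesis TZ : forall a v, inl2 v -> T (fun x => a * v x) = (fun x => a * T v x).
Hypothesis T_bounded : exists M : R, forall v, inl2 v -> l2norm (T v) <= M * l2norm v.

Let unit_ball_image := [set l2norm (T v) | v in [set v | inl2 v /\ l2norm v <= 1]].

Let has_ubound_unit_ball_image : has_ubound unit_ball_image.
Proof.
case: T_bounded => M hM; exists `|M| => _ [v [hv hn] <-].
have := hM v hv; have := l2norm_ge0 v; have := ler_norm M; have := normr_ge0 M; nra.
Qed.

Let opnorm_ub v : inl2 v -> l2norm v <= 1 -> l2norm (T v) <= opnorm T.
Proof. by move=> hv hn; apply: (ub_le_sup has_ubound_unit_ball_image); exists v. Qed.

Lemma opnorm_ge0 : 0 <= opnorm T.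
Proof.
apply: le_trans (opnorm_ub (@inl2_0 R H) _); first exact: l2norm_ge0.
by rewrite l2norm0.
Qed.

Lemma l2norm_op_le v : inl2 v -> l2norm (T v) <= opnorm T * l2norm v.
Proof.
move=> hv; have [n0|n0] := eqVneq (l2norm v) 0.
  have -> : v = (fun _ => 0) by apply: l2sq_eq0; rewrite // -sqr_l2norm n0 expr0n.
  have := TZ 0 (@inl2_0 R H); under eq_fun do rewrite mul0r.
  by move=> ->; rewrite l2norm0 mulr0; under eq_fun do rewrite mul0r; rewrite l2norm0.
have npos : 0 < l2norm v by rewrite lt0r n0 l2norm_ge0.
have := @opnorm_ub (fun x => (l2norm v)^-1 * v x) (inl2Z _ hv).
rewrite TZ // !l2normZ //; last exact: T_l2.
rewrite ger0_norm ?invr_ge0 ?l2norm_ge0 // mulVf // lexx => /(_ isT).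
by rewrite mulrC ler_pdivrMr.
Qed.

End OperatorNorm.

Lemma sqr_le_mul_le (R : realDomainType) (x q : R) :
  0 <= x -> 0 <= q -> x ^+ 2 <= q * x -> x <= q.
Proof. by move=> x0 q0 h; rewrite expr2 in h; nra. Qed.

Lemma invsqrt_bound_gt0 (R : rcfType) (k t alpha : R) :
  0 < alpha -> alpha <= (Num.sqrt k)^-1 * t -> 0 < k.
Proof.
move=> alpha0 alpha_le; rewrite ltNge; apply/negP => k_le0.
by move: alpha_le; rewrite ler0_sqrtr // invr0 mul0r => /(lt_le_trans alpha0); rewrite ltxx.
Qed.

Lemma bulk_parameter_bound (R : rcfType) (a c lam alpha eps p : R) :
  0 <= a -> 0 <= c -> 0 < alpha -> 0 <= eps -> 0 <= p ->
  alpha <= (Num.sqrt (a * c))^-1 * Num.sqrt (1 - a * lam ^+ 2) ->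
  eps ^+ 2 <= a * lam ^+ 2 * eps ^+ 2 + a * c * p ^+ 2 ->
  alpha * eps <= p.
Proof.
move=> a0 c0 alpha0 eps0 p0 alpha_le eps_le; set k := a * c.
have k_gt0 : 0 < k := invsqrt_bound_gt0 alpha0 alpha_le.
have d_gt0 : 0 < 1 - a * lam ^+ 2.
  rewrite ltNge; apply/negP => d0.
  by move: alpha_le; rewrite (ler0_sqrtr d0) mulr0 => /(lt_le_trans alpha0); rewrite ltxx.
have alpha_sqr : alpha ^+ 2 * k <= 1 - a * lam ^+ 2.
  rewrite -ler_pdivlMr // mulrC -(sqr_sqrtr (ltW d_gt0)) -(sqr_sqrtr (ltW k_gt0)).
  by rewrite -exprVn -exprMn lerXn2r // nnegrE ?(ltW alpha0).
have : (alpha * eps) ^+ 2 * k <= p ^+ 2 * k.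
  rewrite exprMn mulrAC; apply: le_trans (ler_wpM2r (sqr_ge0 eps) alpha_sqr) _.
  by rewrite /k in eps_le *; nra.
by rewrite ler_pM2r // ler_sqr // ?nnegrE // mulr_ge0 // ltW.
Qed.

Section SymmetricPositiveDefinite.
Variables (R : realType) (H : choiceType) (A Ainv : (H -> R) -> (H -> R)).
Implicit Types (v w : H -> R).
Hypothesis A_l2 : forall v, inl2 v -> inl2 (A v).
Hypothesis A_linear : forall (a : R) v1 v2, inl2 v1 -> inl2 v2 ->
  A (fun x => a * v1 x + v2 x) = (fun x => a * A v1 x + A v2 x).
Hypothesis A_bounded : exists M : R, forall v, inl2 v -> l2norm (A v) <= M * l2norm v.
Hypothesis A_sym : forall v1 v2, inl2 v1 -> inl2 v2 ->
  l2inner (A v1) v2 = l2inner v1 (A v2).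
Hypothesis A_posdef : forall v, inl2 v -> v <> (fun _ => 0) -> 0 < l2inner (A v) v.
Hypothesis Ainv_l2 : forall v, inl2 v -> inl2 (Ainv v).
Hypothesis AK : forall v, inl2 v -> A (Ainv v) = v.
Hypothesis AinvK : forall v, inl2 v -> Ainv (A v) = v.
Hypothesis Ainv_bounded : exists M : R, forall v, inl2 v -> l2norm (Ainv v) <= M * l2norm v.

Lemma op0 : A (fun _ => 0) = (fun _ => 0).
Proof.
have := A_linear 1 (@inl2_0 R H) (@inl2_0 R H).
under eq_fun do rewrite mulr0 addr0.
move=> /(congr1 (fun g => g _))-e; apply/funext => x.
by have := e x; rewrite mul1r; lra.
Qed.

Lemma opZ a v : inl2 v -> A (fun x => a * v x) = (fun x => a * A v x).
Proof.
move=> hv; have := A_linear a hv (@inl2_0 R H); rewrite op0.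
by under eq_fun do rewrite addr0; under [in RHS]eq_fun do rewrite addr0.
Qed.

Lemma opD a b v1 v2 : inl2 v1 -> inl2 v2 ->
  A (fun x => a * v1 x + b * v2 x) = (fun x => a * A v1 x + b * A v2 x).
Proof. by move=> h1 h2; rewrite (A_linear a h1 (inl2Z b h2)) opZ. Qed.

Lemma opB v1 v2 : inl2 v1 -> inl2 v2 -> A (fun x => v1 x - v2 x) = (fun x => A v1 x - A v2 x).
Proof.
move=> h1 h2; have := opD 1 (-1) h1 h2; under eq_fun do rewrite mul1r mulN1r.
by move=> ->; apply/funext => x; rewrite mul1r mulN1r.
Qed.

Lemma invopZ a v : inl2 v -> Ainv (fun x => a * v x) = (fun x => a * Ainv v x).
Proof.
move=> hv; have -> : (fun x => a * v x) = A (fun x => a * Ainv v x).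
  by rewrite opZ ?AK //; exact: Ainv_l2.
by rewrite AinvK //; apply/inl2Z/Ainv_l2.
Qed.

Definition energy v w := l2inner (A v) w.

Lemma energyDl a b v1 v2 w : inl2 v1 -> inl2 v2 -> inl2 w ->
  energy (fun x => a * v1 x + b * v2 x) w = a * energy v1 w + b * energy v2 w.
Proof. by move=> h1 h2 hw; rewrite /energy opD // l2innerDl //; apply: A_l2. Qed.

Lemma energyC v w : inl2 v -> inl2 w -> energy v w = energy w v.
Proof. by move=> hv hw; rewrite /energy A_sym // l2innerC //; apply: A_l2. Qed.

Lemma energy_ge0 v : inl2 v -> 0 <= energy v v.
Proof.
move=> hv; have [->|nz] := pselect (v = fun _ => 0); first by rewrite /energy op0 l2inner0r.
exact/ltW/A_posdef.
Qed.

Lemma energy_degenerate v w : inl2 v -> inl2 w -> energy v v = 0 -> energy w v = 0.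
Proof.
move=> hv hw vv0; have [->|nz] := pselect (v = fun _ => 0); first by rewrite /energy l2inner0r.
by have := A_posdef hv nz; rewrite -/(energy v v) vv0 ltxx.
Qed.

Lemma energy_cauchy_schwarz v w : inl2 v -> inl2 w ->
  energy v w ^+ 2 <= energy v v * energy w w.
Proof. exact: (cauchy_schwarz energyDl energyC energy_ge0 energy_degenerate). Qed.

Lemma energy_le_opnorm v : inl2 v -> energy v v <= opnorm A * l2sq v.
Proof.
move=> hv; rewrite /energy -sqr_l2norm expr2 mulrA.
apply: le_trans (l2inner_le (A_l2 hv) hv) _; apply: ler_wpM2r; first exact: l2norm_ge0.
exact: (l2norm_op_le A_l2 opZ A_bounded).
Qed.

(* Cauchy-Schwarz for the energy with [w := A v] gives [|A v|^4 <= <A v, v> <A^2 v, A v>]. *)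
Lemma l2sq_op_le_energy v : inl2 v -> l2sq (A v) <= opnorm A * energy v v.
Proof.
move=> hv; have hAv := A_l2 hv.
apply: sqr_le_mul_le; first exact: l2sq_ge0.
  exact: mulr_ge0 (opnorm_ge0 A_bounded) (energy_ge0 hv).
have := energy_cauchy_schwarz hv hAv; rewrite {1}/energy l2inner_self // => h.
apply: (le_trans h); apply: le_trans (ler_wpM2l (energy_ge0 hv) (energy_le_opnorm hAv)) _.
by rewrite mulrA (mulrC (energy v v)).
Qed.

Lemma l2sq_le_energy v : inl2 v -> l2sq v <= opnorm Ainv * energy v v.
Proof.
move=> hv; have hw := Ainv_l2 hv.
have ww : energy (Ainv v) (Ainv v) <= opnorm Ainv * l2sq v.
  rewrite /energy AK //; apply: le_trans (l2inner_le hv hw) _.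
  rewrite -sqr_l2norm expr2 mulrCA.
  apply: ler_wpM2l; first exact: l2norm_ge0.
  exact: (l2norm_op_le Ainv_l2 invopZ Ainv_bounded).
apply: sqr_le_mul_le; first exact: l2sq_ge0.
  exact: mulr_ge0 (opnorm_ge0 Ainv_bounded) (energy_ge0 hv).
have := energy_cauchy_schwarz hw hv; rewrite {1}/energy AK // l2inner_self // => h.
apply: (le_trans h); apply: le_trans (ler_wpM2r (energy_ge0 hv) ww) _.
by rewrite (mulrAC (opnorm Ainv)).
Qed.

Lemma energy_supported e y (P : pred H) : inl2 e -> inl2 y ->
  (forall x, ~~ P x -> y x = 0) ->
  energy e y = l2inner (fun x => if P x then A e x else 0) y.
Proof.
move=> he hy hP; have hAe := A_l2 he.
set PAe := fun x => if P x then A e x else 0.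
have hPAe : inl2 PAe.
  by apply: (inl2_sqr_le hAe) => x; rewrite /PAe; case: (P x); rewrite ?expr0n ?sqr_ge0.
have hQAe := inl2B hAe hPAe.
have -> : energy e y = l2inner (fun x => 1 * PAe x + 1 * (A e x - PAe x)) y.
  rewrite /energy; congr (l2inner _ y).
  by apply/funext => x; rewrite !mul1r addrC subrK.
rewrite l2innerDl // (@l2inner_disjoint _ _ (fun x => A e x - PAe x) y) //.
  by rewrite mulr0 addr0 mul1r.
by move=> x; rewrite /PAe; case: ifPn => [_|/hP ->]; rewrite ?subrr ?mul0r ?mulr0.
Qed.

Lemma energy_sub_expand e y : inl2 e -> inl2 y ->
  energy e e = energy (fun x => e x - y x) (fun x => e x - y x)
               + (2 * energy e y - energy y y).
Proof.
move=> he hy; have -> : (fun x => e x - y x) = (fun x => 1 * e x + (-1) * y x).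
  by apply/funext => x; rewrite mul1r mulN1r.
have hz := inl2_lin 1 (-1) he hy.
rewrite energyDl // (energyC he hz) (energyC hy hz) !energyDl // (energyC hy he).
ring.
Qed.

(* [|y|^2 <= c <A y, y>] and [2 ab - b^2 / c <= c a^2] bound the cross term. *)
Lemma energy_cross_le e y (P : pred H) : inl2 e -> inl2 y ->
  (forall x, ~~ P x -> y x = 0) ->
  2 * energy e y - energy y y <=
    opnorm Ainv * l2sq (fun x => if P x then A e x else 0).
Proof.
move=> he hy hP; set PAe := fun x => if P x then A e x else 0.
have hPAe : inl2 PAe.
  by apply: (inl2_sqr_le (A_l2 he)) => x; rewrite /PAe; case: (P x); rewrite ?expr0n ?sqr_ge0.
rewrite (energy_supported he hy hP) -/PAe -sqr_l2norm.
have := l2inner_le hPAe hy; have := l2sq_le_energy hy; rewrite -sqr_l2norm.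
have := energy_ge0 hy; have := opnorm_ge0 Ainv_bounded.
have := l2norm_ge0 y; have := l2norm_ge0 PAe.
move: (l2inner PAe y) (energy y y) (opnorm Ainv) (l2norm y) (l2norm PAe).
move=> q E c n p p0 n0 c0 E0 yy cross.
have [c_eq0|c_gt0] := eqVneq c 0.
  rewrite c_eq0 mul0r in yy *; have n_eq0 : n = 0.
    by apply/eqP; rewrite -sqrf_eq0 eq_le yy sqr_ge0.
  by rewrite n_eq0 mulr0 in cross; lra.
have {}c_gt0 : 0 < c by rewrite lt0r c_gt0.
rewrite -(ler_pM2l c_gt0); have := sqr_ge0 (c * p - n); nra.
Qed.

Lemma bulk_criterion e y (P : pred H) (alpha lam : R) :
  inl2 e -> inl2 y -> (forall x, ~~ P x -> y x = 0) ->
  opnorm A * l2sq (fun x => e x - y x) <= lam ^+ 2 * l2sq (A e) ->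
  0 < alpha ->
  alpha <= (Num.sqrt (opnorm A * opnorm Ainv))^-1 * Num.sqrt (1 - opnorm A * lam ^+ 2) ->
  alpha * l2norm (A e) <= l2norm (fun x => if P x then A e x else 0).
Proof.
move=> he hy hP ey_le alpha0 alpha_le.
have a0 := opnorm_ge0 A_bounded.
apply: (bulk_parameter_bound a0 (opnorm_ge0 Ainv_bounded) alpha0 (l2norm_ge0 _)
  (l2norm_ge0 _) alpha_le).
rewrite !sqr_l2norm -mulrA -mulrA -mulrDr.
apply: le_trans (l2sq_op_le_energy he) _; apply: ler_wpM2l; first exact: a0.
rewrite (energy_sub_expand he hy); apply: lerD; last exact: energy_cross_le.
exact: le_trans (energy_le_opnorm (inl2B he hy)) ey_le.
Qed.

(* Take [y := w - R_P u] in [bulk_criterion], so that [e - y = R_P u - u]. *)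
Lemma bulk_of_capture w u (P : pred H) (alpha lam : R) : inl2 w -> inl2 u ->
  (forall x, ~~ P x -> w x = 0) ->
  opnorm A * l2sq (fun x => u x - if P x then u x else 0)
    <= lam ^+ 2 * l2sq (A (fun x => w x - u x)) ->
  0 < alpha ->
  alpha <= (Num.sqrt (opnorm A * opnorm Ainv))^-1 * Num.sqrt (1 - opnorm A * lam ^+ 2) ->
  alpha * l2norm (A (fun x => w x - u x))
    <= l2norm (fun x => if P x then A (fun x => w x - u x) x else 0).
Proof.
move=> hw hu w_supp capture alpha0 alpha_le; set Pu := fun x => if P x then u x else 0.
have hPu : inl2 Pu.
  by apply: (inl2_sqr_le hu) => x; rewrite /Pu; case: (P x); rewrite ?expr0n ?sqr_ge0.
apply: (bulk_criterion (inl2B hw hu) (inl2B hw hPu) _ _ alpha0 alpha_le).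
  by move=> x xP; rewrite /Pu (negPf xP) w_supp ?subr0.
rewrite (@eq_l2sq _ _ _ (fun x => u x - Pu x)) => [|||x]; last by ring.
- exact: capture.
- exact: inl2B (inl2B hw hu) (inl2B hw hPu).
- exact: inl2B hu hPu.
Qed.

End SymmetricPositiveDefinite.

Definition tail (T : eqType) (R : nmodType) (v : T -> R) (s : seq T) : T -> R :=
  fun x => if x \in s then 0 else v x.

Lemma inl2_finset (R : realType) (H : choiceType) (v : H -> R) (D : set H) :
  finite_set D -> (forall x, v x != 0 -> D x) -> inl2 v.
Proof.
move=> fD hD; rewrite /inl2 /sqnorm.
rewrite (@eq_esum _ _ _ _ (fun x => if x \in D then (v x ^+ 2)%:E else 0%E)); last first.
  move=> x _; case: ifPn => // /negP xD; have [->|/hD] := eqVneq (v x) 0.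
    by rewrite expr0n.
  by rewrite -in_setE.
rewrite -esum_mkcond esum_fset //; last by move=> x _; rewrite lee_fin sqr_ge0.
by rewrite fsbig_finite //= sumEFin ltry.
Qed.

Section Tails.
Variables (R : realType) (H : countType).
Implicit Types (v w : H -> R) (sq : seq H).

Lemma tail_sqr_le v sq x : tail v sq x ^+ 2 <= v x ^+ 2.
Proof. by rewrite /tail; case: ifP; rewrite ?expr0n ?sqr_ge0. Qed.

Lemma inl2_tail v sq : inl2 v -> inl2 (tail v sq).
Proof. by move=> hv; apply: (inl2_sqr_le hv) => x; exact: tail_sqr_le. Qed.

Lemma l2sq_tail_catl v (sq sq' : seq H) : inl2 v -> l2sq (tail v (sq ++ sq')) <= l2sq (tail v sq').
Proof.
move=> hv; apply: l2sq_le; first exact: inl2_tail.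
move=> x; rewrite /tail mem_cat; case: (x \in sq'); rewrite ?orbT ?orbF //=.
exact: (tail_sqr_le v sq x).
Qed.

Lemma best_nterm_ge0 v N : 0 <= best_nterm v N.
Proof.
apply: lb_le_inf; last by move=> _ [w _ <-]; exact: l2norm_ge0.
exists (l2norm (fun x => v x - 0)); exists (fun _ => 0) => //.
by exists [::]; split => // x; rewrite eqxx.
Qed.

Lemma best_nterm_le_as_norm (s : R) v N : (as_norm s v < +oo)%E ->
  N.+1%:R `^ s * best_nterm v N <= fine (as_norm s v).
Proof.
move=> fin_v; have le_sup : (((N.+1%:R `^ s) * best_nterm v N)%:E <= as_norm s v)%E.
  by apply: ereal_sup_ubound; exists N.
rewrite -lee_fin fineK // ge0_fin_numE // (le_trans _ le_sup) //.
by rewrite lee_fin mulr_ge0 ?powR_ge0 ?best_nterm_ge0.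
Qed.

Lemma as_norm_ge0 (s : R) v : 0 <= fine (as_norm s v).
Proof.
apply: fine_ge0; apply: le_trans (ereal_sup_ubound _) => /=; last by exists 0%N.
by rewrite lee_fin mulr_ge0 ?powR_ge0 ?best_nterm_ge0.
Qed.

Lemma tail_lt_of_best_nterm v N (delta : R) : inl2 v -> best_nterm v N < delta ->
  exists sq, (size sq <= N)%N /\ l2sq (tail v sq) < delta ^+ 2.
Proof.
move=> hv; have nonempty : [set l2norm (fun x => v x - w x) | w in [set w | supp_le w N]] !=set0.
  exists (l2norm (fun x => v x - 0)); exists (fun _ => 0) => //.
  by exists [::]; split => // x; rewrite eqxx.
move=> /(inf_lt nonempty) [_ [w [sq [size_sq supp_w]] <-] vw_lt].
exists sq; split => //; have hw : inl2 w := inl2_finset (finite_seq sq) supp_w.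
apply: le_lt_trans (l2sq_le (inl2B hv hw) _) _.
  move=> x; rewrite /tail; case: ifPn => xs; first by rewrite expr0n sqr_ge0.
  have [->|/supp_w] := eqVneq (w x) 0; [by rewrite subr0 | by rewrite (negPf xs)].
rewrite -sqr_l2norm ltr_pXn2r // nnegrE ?l2norm_ge0 //.
exact: ltW (le_lt_trans (l2norm_ge0 _) vw_lt).
Qed.

(* Take for [N] the integer part of [(|v|_A^s / delta)^(1/s)], so that [(N+1)^s delta]
   exceeds [|v|_A^s >= (N+1)^s sigma_N(v)]. *)
Lemma best_nterm_support (s : R) v (delta : R) : 0 < s -> 0 < delta -> inAs s v ->
  exists sq : seq H, (size sq)%:R <= (fine (as_norm s v) / delta) `^ s^-1 /\
                     l2sq (tail v sq) < delta ^+ 2.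
Proof.
move=> s_gt0 delta_gt0 [hv fin_v]; set K := fine (as_norm s v).
set x0 := (K / delta) `^ s^-1; set N := Num.truncn x0.
have /andP[N_le N_gt] := archimedean.Num.Theory.truncn_itv (powR_ge0 (K / delta) s^-1).
have K_lt : K / delta < N.+1%:R `^ s.
  have -> : K / delta = x0 `^ s.
    rewrite /x0 -powRrM mulVf ?(lt0r_neq0 s_gt0) // powRr1 //.
    exact: divr_ge0 (as_norm_ge0 s v) (ltW delta_gt0).
  by rewrite gt0_ltr_powR ?nnegrE ?powR_ge0 ?ler0n.
have best_lt : best_nterm v N < delta.
  rewrite -(ltr_pM2l (powR_gt0 s (ltr0Sn R N))).
  by apply: le_lt_trans (best_nterm_le_as_norm N fin_v) _; rewrite -ltr_pdivrMr // mulrC.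
have [sq [size_sq tail_lt]] := tail_lt_of_best_nterm hv best_lt.
by exists sq; split => //; apply: le_trans N_le; rewrite ler_nat.
Qed.

End Tails.

Lemma esum_le_setT (R : realType) (T : choiceType) (D : set T) (f : T -> \bar R) :
  (forall x, 0 <= f x)%E -> (\esum_(x in D) f x <= \esum_(x in [set: T]) f x)%E.
Proof. by move=> f0; rewrite esum_mkcond; apply: le_esum => x _; case: ifPn. Qed.

Lemma sqr_sqrt_fine (R : realType) (E : \bar R) : (0 <= E)%E -> (E < +oo)%E ->
  ((Num.sqrt (fine E)) ^+ 2)%:E = E.
Proof. by move=> E0 Eoo; rewrite sqr_sqrtr ?fine_ge0 // fineK // ge0_fin_numE. Qed.

Section Contractions.
Variables (R : realType) (G0 : countType) (J : nat).
Notation G := (Gidx G0 J).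
Implicit Types (u : G -> R).

Lemma esum_Gidx (f : G -> \bar R) : (forall x, 0 <= f x)%E ->
  \esum_(x in [set: G]) f x =
  \esum_(g in [set: G0]) \esum_(t in [set: J.-tuple nat]) f (g, t).
Proof.
move=> f0; rewrite esum_esum //.
have -> : [set: G0] `*`` (fun _ => [set: J.-tuple nat]) = [set: G].
  by apply/seteqP; split => // -[].
by apply: eq_esum => -[].
Qed.

Lemma pi0E u g : inl2 u ->
  ((pi0 u g) ^+ 2)%:E = \esum_(t in [set: J.-tuple nat]) ((u (g, t)) ^+ 2)%:E.
Proof.
move=> hu; rewrite /pi0 sqr_sqrt_fine //; first by apply: esum_ge0 => t _; rewrite lee_fin sqr_ge0.
apply: le_lt_trans hu; rewrite /sqnorm esum_Gidx => [|x]; last by rewrite lee_fin sqr_ge0.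
apply: esum_ge; exists [set g]; first by split => //; exact: finite_set1.
by rewrite fsbig_set1.
Qed.

Lemma pijE u k n : inl2 u ->
  ((pij k u n) ^+ 2)%:E = \esum_(x in [set x : G | tnth x.2 k = n]) ((u x) ^+ 2)%:E.
Proof.
move=> hu; rewrite /pij sqr_sqrt_fine //; first by apply: esum_ge0 => t _; rewrite lee_fin sqr_ge0.
by apply: le_lt_trans hu; apply: esum_le_setT => x; rewrite lee_fin sqr_ge0.
Qed.

Lemma sqnorm_tail_pi0 u (M0 : seq G0) : inl2 u ->
  \esum_(x in [set: G]) ((if x.1 \in M0 then 0 else u x ^+ 2)%:E) =
  sqnorm (tail (pi0 u) M0).
Proof.
move=> hu; rewrite esum_Gidx => [|x]; last by case: ifPn; rewrite // lee_fin sqr_ge0.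
apply: eq_esum => g _; rewrite /tail; case: ifPn => _; last by rewrite pi0E.
by rewrite expr0n esum1.
Qed.

Lemma sqnorm_tail_pij u (M : 'I_J -> seq nat) k : inl2 u ->
  \esum_(x in [set: G]) ((if tnth x.2 k \in M k then 0 else u x ^+ 2)%:E) =
  sqnorm (tail (pij k u) (M k)).
Proof.
move=> hu; have -> : [set: G] = \bigcup_(n in [set: nat]) [set x : G | tnth x.2 k = n].
  by apply/seteqP; split => // x _; exists (tnth x.2 k).
rewrite esum_bigcupT; last 2 first.
- by move=> i j _ _ [x [/= -> ->]].
- by move=> x; case: ifPn; rewrite // lee_fin sqr_ge0.
apply: eq_esum => n _; rewrite /tail; case: ifPn => hn.
  by rewrite expr0n esum1 // => x /= ->; rewrite hn.
by rewrite pijE //; apply: eq_esum => x /= ->; rewrite (negPf hn).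
Qed.

(* A point outside the product set misses [M0] or some [M k], and its mass is counted by the
   corresponding contraction. *)
Lemma sqnorm_sub_restr_le u (M0 : seq G0) (M : 'I_J -> seq nat) : inl2 u ->
  (sqnorm (fun x => (u x - restr M0 M u x)%R) <=
   sqnorm (tail (pi0 u) M0) + \sum_(k < J) sqnorm (tail (pij k u) (M k)))%E.
Proof.
move=> hu; rewrite -sqnorm_tail_pi0 //; under eq_bigr do rewrite -sqnorm_tail_pij //.
have term_ge0 (b : bool) (x : G) : (0 <= (if b then 0 else u x ^+ 2)%:E)%E.
  by case: b; rewrite // lee_fin sqr_ge0.
rewrite -esum_sum // -esumD // => [|x _]; last exact: sume_ge0.
apply: le_esum => x _; rewrite /restr; case: ifPn => hin.
  by rewrite subrr expr0n adde_ge0 ?sume_ge0.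
rewrite subr0; move: hin; rewrite /in_prod negb_and => /orP[/negPf-> |].
  by rewrite leeDl ?sume_ge0.
rewrite negb_forall => /existsP[k /negPf hk].
by rewrite (bigD1 k) //= hk addeCA leeDl // adde_ge0 ?sume_ge0.
Qed.

Lemma prod_supported_cat (L0 s0 : seq G0) (L s : 'I_J -> seq nat) u :
  (forall x, ~~ in_prod L0 L x -> u x = 0) ->
  forall x, ~~ in_prod (L0 ++ s0) (fun k => L k ++ s k) x -> u x = 0.
Proof.
move=> u_supp x x_out; apply: u_supp; apply: contra x_out => /andP[x0 /forallP xL].
by rewrite /in_prod mem_cat x0; apply/forallP => k; rewrite mem_cat xL.
Qed.

Lemma l2sq_sub_restr_cat u (L0 s0 : seq G0) (L s : 'I_J -> seq nat) (d : R) :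
  inl2 u -> inl2 (pi0 u) -> (forall k, inl2 (pij k u)) ->
  l2sq (tail (pi0 u) s0) <= d -> (forall k, l2sq (tail (pij k u) (s k)) <= d) ->
  l2sq (fun x => u x - restr (L0 ++ s0) (fun k => L k ++ s k) u x) <= J.+1%:R * d.
Proof.
move=> hu hpi0 hpij tail0 tailk.
have hres : inl2 (fun x => u x - restr (L0 ++ s0) (fun k => L k ++ s k) u x).
  apply: (inl2_sqr_le hu) => x; rewrite /restr.
  by case: ifP; rewrite ?subrr ?subr0 ?expr0n ?sqr_ge0.
have := sqnorm_sub_restr_le (L0 ++ s0) (fun k => L k ++ s k) hu.
rewrite sqnormE // (sqnormE (inl2_tail _ hpi0)).
under eq_bigr do rewrite (sqnormE (inl2_tail _ (hpij _))).
rewrite sumEFin -EFinD lee_fin => /le_trans; apply.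
rewrite -add1n natrD mulrDl mul1r; apply: lerD.
  exact: le_trans (l2sq_tail_catl _ _ hpi0) tail0.
apply: le_trans (_ : _ <= \sum_(k < J) d) _; last by rewrite sumr_const card_ord mulr_natl.
by apply: ler_sum => k _; exact: le_trans (l2sq_tail_catl _ _ (hpij k)) (tailk k).
Qed.

End Contractions.

Lemma finite_in_prod (G0 : countType) (J : nat) (L0 : seq G0) (L : 'I_J -> seq nat) :
  finite_set [set x : Gidx G0 J | in_prod L0 L x].
Proof.
set m := \max_(k < J) \max_(n <- L k) n.
have le_m k n : n \in L k -> (n <= m)%N.
  move=> hn; apply: leq_trans (leq_bigmax_cond k isT).
  exact: (@leq_bigmax_seq _ (L k) xpredT (fun n => n) n hn).
pose tuple_of (f : {ffun 'I_J -> 'I_m.+1}) : J.-tuple nat := [tuple val (f k) | k < J].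
apply: (@sub_finite_set _ _ ([set` L0] `*` (tuple_of @` [set: {ffun 'I_J -> 'I_m.+1}]))).
  move=> x /andP[h1 /forallP h2]; split => //=.
  exists [ffun k => inord (tnth x.2 k)] => //.
  apply: eq_from_tnth => k; rewrite tnth_mktuple ffunE; apply: inordK.
  by rewrite ltnS; apply: le_m (h2 k).
apply: finite_setX; first exact: finite_seq.
by apply: finite_image; exact: finite_finset.
Qed.

Lemma inl2_prod_supported (R : realType) (G0 : countType) (J : nat) (L0 : seq G0)
    (L : 'I_J -> seq nat) (w : Gidx G0 J -> R) :
  (forall x, ~~ in_prod L0 L x -> w x = 0) -> inl2 w.
Proof.
move=> w_supp; apply: inl2_finset (finite_in_prod L0 L) _ => x.
by apply: contraNT => /w_supp ->.
Qed.

Lemma card_diff_catr (T : eqType) (s t : seq T) : (card_diff (s ++ t) s <= size t)%N.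
Proof.
rewrite /card_diff (leq_trans (size_undup _)) // filter_cat.
rewrite (@eq_in_filter _ _ pred0) ?filter_pred0 => [|x ->] //.
by rewrite size_filter count_size.
Qed.

Lemma card_diffss (T : eqType) (s : seq T) : card_diff s s = 0%N.
Proof. by rewrite /card_diff (@eq_in_filter _ _ pred0) ?filter_pred0 => // x ->. Qed.

Lemma prod_cost_self (G0 : countType) (J : nat) (L0 : seq G0) (L : 'I_J -> seq nat) :
  prod_cost L0 L L0 L = 0%N.
Proof. by rewrite /prod_cost card_diffss big1 // => k _; exact: card_diffss. Qed.

Lemma prod_cost_cat (G0 : countType) (J : nat) (L0 s0 : seq G0) (L s : 'I_J -> seq nat) :
  (prod_cost (L0 ++ s0) (fun k => L k ++ s k) L0 L <= size s0 + \sum_(k < J) size (s k))%N.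
Proof. by rewrite leq_add ?card_diff_catr // leq_sum // => k _; exact: card_diff_catr. Qed.

Lemma scaled_tolerance_le (R : rcfType) (J : nat) (a lam eps : R) : 0 < a -> 0 < lam ->
  a * (J.+1%:R * (eps / (J.+1%:R * Num.sqrt a / lam)) ^+ 2) <= lam ^+ 2 * eps ^+ 2.
Proof.
move=> a0 lam0; have sa0 : 0 < Num.sqrt a by rewrite sqrtr_gt0.
have n1 : 1 <= J.+1%:R :> R by rewrite ler1n.
move: n1; set n := J.+1%:R => n1; have n0 : 0 < n by apply: lt_le_trans n1.
have -> : a * (n * (eps / (n * Num.sqrt a / lam)) ^+ 2) = lam ^+ 2 * eps ^+ 2 / n.
  rewrite -{1}(sqr_sqrtr (ltW a0)); field.
  by rewrite !lt0r_neq0.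
rewrite ler_pdivrMr //; have := mulr_ge0 (sqr_ge0 lam) (sqr_ge0 eps); nra.
Qed.

Lemma powR_ratio (R : realType) (C eps K p : R) : 0 < C -> 0 < eps -> 0 <= K ->
  (K / (eps / C)) `^ p = C `^ p * eps `^ (- p) * K `^ p.
Proof.
move=> C0 eps0 K0; have -> : K / (eps / C) = C * eps^-1 * K.
  by field; rewrite !lt0r_neq0.
rewrite powRM ?mulr_ge0 ?invr_ge0 ?(ltW C0) ?(ltW eps0) //.
rewrite powRM ?invr_ge0 ?(ltW C0) ?(ltW eps0) // powRN.
by congr (_ * _ * _); rewrite /powR invr_eq0 gt_eqF // lnV ?posrE // mulrN expRN.
Qed.

Lemma cost_le_approx_bounds (R : realType) (J n n0 : nat) (nk : 'I_J -> nat)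
    (C eps K0 s1 s2 : R) (K : 'I_J -> R) :
  0 < C -> 0 < eps -> 0 <= K0 -> (forall k, 0 <= K k) ->
  (n <= n0 + \sum_(k < J) nk k)%N ->
  n0%:R <= (K0 / (eps / C)) `^ s1^-1 ->
  (forall k, (nk k)%:R <= (K k / (eps / C)) `^ s2^-1) ->
  n%:R <= 2 * C `^ s1^-1 * eps `^ (- s1^-1) * K0 `^ s1^-1
        + 2 * C `^ s2^-1 * eps `^ (- s2^-1) * \sum_(k < J) K k `^ s2^-1.
Proof.
move=> C0 eps0 K00 K0k n_le n0_le nk_le.
have n_le' : n%:R <= n0%:R + \sum_(k < J) (nk k)%:R :> R.
  by rewrite -natr_sum -natrD ler_nat.
rewrite powR_ratio // in n0_le.
have sum_le : \sum_(k < J) (nk k)%:R <=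
    C `^ s2^-1 * eps `^ (- s2^-1) * \sum_(k < J) K k `^ s2^-1.
  by rewrite mulr_sumr; apply: ler_sum => k _; rewrite -powR_ratio.
have P0 : 0 <= C `^ s1^-1 * eps `^ (- s1^-1) * K0 `^ s1^-1 by rewrite !mulr_ge0 ?powR_ge0.
have P1 : 0 <= C `^ s2^-1 * eps `^ (- s2^-1) * \sum_(k < J) K k `^ s2^-1.
  by rewrite !mulr_ge0 ?powR_ge0 ?sumr_ge0 // => k _; rewrite powR_ge0.
rewrite -!mulrA; lra.
Qed.

Theorem theorem4p5 (R : realType) (G0 : countType) (J : nat)
  (A Ainv : (Gidx G0 J -> R) -> (Gidx G0 J -> R)) (f u : Gidx G0 J -> R)
  (alpha lam s1 s2 : R)
  (L0 : seq G0) (L : 'I_J -> seq nat) (w : Gidx G0 J -> R)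
  (Ls0 : seq G0) (Ls : 'I_J -> seq nat) :
  (1 <= J)%N ->
  (* A is a bounded, symmetric, positive definite operator on l2(G) *)
  (forall v, inl2 v -> inl2 (A v)) ->
  (forall (a : R) v1 v2, inl2 v1 -> inl2 v2 ->
     A (fun x => a * v1 x + v2 x) = (fun x => a * A v1 x + A v2 x)) ->
  (exists M : R, forall v, inl2 v -> l2norm (A v) <= M * l2norm v) ->
  (forall v1 v2, inl2 v1 -> inl2 v2 -> l2inner (A v1) v2 = l2inner v1 (A v2)) ->
  (forall v, inl2 v -> v <> (fun _ => 0) -> 0 < l2inner (A v) v) ->
  (* Ainv is the (bounded) inverse of A on l2(G) *)
  (forall v, inl2 v -> inl2 (Ainv v)) ->
  (forall v, inl2 v -> A (Ainv v) = v) ->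
  (forall v, inl2 v -> Ainv (A v) = v) ->
  (exists M : R, forall v, inl2 v -> l2norm (Ainv v) <= M * l2norm v) ->
  (* f in l2, u solves A u = f *)
  inl2 f -> inl2 u -> A u = f ->
  (* parameters; kappa(A) = ||A|| ||A^-1|| *)
  let kappa := opnorm A * opnorm Ainv in
  0 < alpha -> alpha < (Num.sqrt kappa)^-1 ->
  0 < lam ->
  alpha <= (Num.sqrt kappa)^-1 * Num.sqrt (1 - opnorm A * lam ^+ 2) ->
  (* w_Lambda supported in the finite product set Lambda *)
  (forall x, ~~ in_prod L0 L x -> w x = 0) ->
  (* compressibility of the contractions of u *)
  0 < s1 -> 0 < s2 ->
  inAs s1 (pi0 u) ->
  (forall k : 'I_J, inAs s2 (pij k u)) ->
  let r := fun x => A w x - f x in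
  (* Lambda* is a minimizer of sum_j #(Lambda*_j \ Lambda_j) among the
     product sets satisfying the bulk criterion *)
  alpha * l2norm r <= l2norm (restr Ls0 Ls r) ->
  (forall (M0 : seq G0) (M : 'I_J -> seq nat),
     alpha * l2norm r <= l2norm (restr M0 M r) ->
     (prod_cost Ls0 Ls L0 L <= prod_cost M0 M L0 L)%N) ->
  let C := (J.+1%:R) * Num.sqrt (opnorm A) / lam in
  (prod_cost Ls0 Ls L0 L)%:R <=
    2 * C `^ (s1^-1) * l2norm r `^ (- s1^-1) * fine (as_norm s1 (pi0 u)) `^ (s1^-1)
  + 2 * C `^ (s2^-1) * l2norm r `^ (- s2^-1)
      * \sum_(k < J) fine (as_norm s2 (pij k u)) `^ (s2^-1).
Proof.
move=> _ A_l2 A_linear A_bounded A_sym A_posdef Ainv_l2 AK AinvK Ainv_bounded _ hu Au kappa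
  alpha0 _ lam0 alpha_le w_supp s1_gt0 s2_gt0 hpi0 hpij r _ minimal.
cbv zeta; set C := J.+1%:R * _ / lam.
have [r0|r_neq0] := eqVneq (l2norm r) 0.
  have /eqP-> : prod_cost Ls0 Ls L0 L == 0%N.
    by rewrite -leqn0 -(prod_cost_self L0 L) minimal // r0 mulr0 l2norm_ge0.
  by rewrite r0 !powR0 ?oppr_eq0 ?invr_eq0 ?gt_eqF // !mulr0 !mul0r addr0.
have r_gt0 : 0 < l2norm r by rewrite lt0r r_neq0 l2norm_ge0.
have A_gt0 : 0 < opnorm A.
  have := invsqrt_bound_gt0 alpha0 alpha_le; rewrite /kappa.
  by have := opnorm_ge0 A_bounded; have := opnorm_ge0 Ainv_bounded; nra.
have C_gt0 : 0 < C by rewrite divr_gt0 // mulr_gt0 ?ltr0Sn ?sqrtr_gt0.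
set delta := l2norm r / C; have delta_gt0 : 0 < delta by exact: divr_gt0.
have [s0 [size_s0 tail_s0]] := best_nterm_support s1_gt0 delta_gt0 hpi0.
have /fin_all_exists[s size_tail_s] := fun k => best_nterm_support s2_gt0 delta_gt0 (hpij k).
have capture : l2sq (fun x => u x - restr (L0 ++ s0) (fun k => L k ++ s k) u x)
    <= J.+1%:R * delta ^+ 2.
  exact: l2sq_sub_restr_cat hu hpi0.1 (fun k => (hpij k).1) (ltW tail_s0)
    (fun k => ltW (size_tail_s k).2).
have hw := inl2_prod_supported w_supp.
have r_eq : r = A (fun x => w x - u x) by rewrite /r (opB A_linear hw hu) Au.
have bulk : alpha * l2norm r <= l2norm (restr (L0 ++ s0) (fun k => L k ++ s k) r).
  rewrite r_eq; apply: (bulk_of_capture A_l2 A_linear A_bounded A_sym A_posdef Ainv_l2 AK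
    AinvK Ainv_bounded hw hu (prod_supported_cat (s0 := s0) (s := s) w_supp) _ alpha0 alpha_le).
  rewrite -r_eq -[l2sq r]sqr_l2norm.
  apply: le_trans (scaled_tolerance_le J (l2norm r) A_gt0 lam0).
  by apply: ler_wpM2l; first exact: ltW A_gt0.
apply: (cost_le_approx_bounds C_gt0 r_gt0 (as_norm_ge0 _ _) (fun k => as_norm_ge0 _ _)
  (leq_trans (minimal _ _ bulk) (prod_cost_cat _ _ _ _)) size_s0).
by move=> k; exact: (size_tail_s k).1.
Qed.
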